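(* Let $X$ be a set. For every directed pseudo-metric $d$ on $\mathcal P(X)$, $\alpha_T(\gamma_T(d))$ is the greatest directed pseudo-metric $d'$ on $\mathcal P(X)$ such that $d'\le d$ and $d'$ is join-preserving in its first argument.
   Context: $r\oplus s=\min\{r+s,1\}$, $r\ominus s=\max\{0,r-s\}$. A directed pseudo-metric on $Y$ is $d\colon Y\times Y\to[0,1]$ with $d(y,y)=0$ and $d(x,z)\le d(x,y)\oplus d(y,z)$. $d'$ on $\mathcal P(X)$ is join-preserving in its first argument if $d'(\bigcup_iX_i,Y)=\bigvee_id'(X_i,Y)$ for all families (empty join $=0$). For $f\colon X\to[0,1]$, $\tilde f(Y)=\bigvee_{x\in Y}f(x)$. $\alpha_T(\mathcal F)(X_1,X_2)=\bigvee_{f\in\mathcal F}(\tilde f(X_1)\ominus\tilde f(X_2))$ for $\mathcal F\subseteq[0,1]^X$; $\gamma_T(d)=\{f\in[0,1]^X\mid\forall X_1,X_2\subseteq X\colon\tilde f(X_1)\ominus\tilde f(X_2)\le d(X_1,X_2)\}$. *)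

From HB Require Import structures.
From mathcomp Require Import all_boot all_order all_algebra.
From mathcomp Require Import all_classical all_reals.
Set Implicit Arguments. Unset Strict Implicit. Unset Printing Implicit Defensive.
Import Order.TTheory GRing.Theory Num.Theory.
Local Open Scope classical_set_scope.
Local Open Scope ring_scope.

Definition oplus {R : realType} (r s : R) : R := Num.min (r + s) 1.
Definition ominus {R : realType} (r s : R) : R := Num.max 0 (r - s).

(* Join in the complete lattice [0,1] of a set of values in [0,1]:
   the supremum, with empty join = 0 (bottom). *)
Definition join01 {R : realType} (S : set R) : R := sup (S `|` [set 0]).

Definition in01 {R : realType} (r : R) : Prop := 0 <= r /\ r <= 1.

Definition directed_pseudometric {R : realType} {Y : Type} (d : Y -> Y -> R) : Prop :=
  (forall x y, in01 (d x y)) /\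
  (forall y, d y y = 0) /\
  (forall x y z, d x z <= oplus (d x y) (d y z)).

Definition join_preserving_first {R : realType} {X : Type}
  (d : set X -> set X -> R) : Prop :=
  forall (I : Type) (Xs : I -> set X) (Y : set X),
    d (\bigcup_(i in [set: I]) Xs i) Y = join01 [set d (Xs i) Y | i in [set: I]].

Definition lift {R : realType} {X : Type} (f : X -> R) (Y : set X) : R :=
  join01 (f @` Y).

Definition alphaT {R : realType} {X : Type} (F : set (X -> R)) : set X -> set X -> R :=
  fun X1 X2 => join01 [set ominus (lift f X1) (lift f X2) | f in F].

Definition gammaT {R : realType} {X : Type} (d : set X -> set X -> R) : set (X -> R) :=
  [set f | (forall x, in01 (f x)) /\
           forall X1 X2 : set X, ominus (lift f X1) (lift f X2) <= d X1 X2].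

From Pilot Require Import Defs.
From mathcomp Require Import all_boot all_order all_algebra.
From mathcomp Require Import all_classical all_reals.
From mathcomp Require Import lra.
Import Order.TTheory GRing.Theory Num.Theory.
Local Open Scope classical_set_scope.
Local Open Scope ring_scope.

(* For any family [F] of [0,1]-valued maps, [alphaT F] is a join-preserving
   directed pseudo-metric, since [lift f] turns unions into joins; and
   [alphaT (gammaT d) <= d] by definition of [gammaT].  Conversely, if [d'] is
   join-preserving then [d'(X1, Y)] is the join of [d'({x}, Y)] over [x] in
   [X1], so [f := fun x => d'({x}, Y)] satisfies [lift f = d'(-, Y)].  The
   triangle inequality puts [f] in [gammaT d'], and [d'(Y, Y) = 0] gives
   [d'(X1, Y) = ominus (lift f X1) (lift f Y) <= alphaT (gammaT d') X1 Y]. *)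

Local Notation lift := Defs.lift.

Section UnitInterval.
Context {R : realType}.
Implicit Types (S : set R) (a b c p q : R).

Lemma join01_ub S s : (forall t, S t -> in01 t) -> S s -> s <= join01 S.
Proof.
move=> S01 Ss; apply: sup_upper_bound; last by left.
split; first by exists 0; right.
by exists 1 => t [/S01 [_ ->]|->].
Qed.

Lemma join01_le S b : 0 <= b -> (forall t, S t -> t <= b) -> join01 S <= b.
Proof.
move=> b0 Sb; apply: ge_sup; first by exists 0; right.
by move=> t [/Sb|->].
Qed.

Lemma join01_in01 S : (forall t, S t -> in01 t) -> in01 (join01 S).
Proof.
move=> S01; split; last by apply: join01_le => // t /S01 [].
apply: sup_upper_bound; last by right.
split; first by exists 0; right.
by exists 1 => t [/S01 [_ ->]|->].
Qed.

Lemma ominus_in01 a b : in01 a -> in01 b -> in01 (ominus a b).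
Proof.
move=> [? ?] [? ?]; split; first by rewrite le_max lexx.
by rewrite ge_max; apply/andP; split; lra.
Qed.

Lemma ominusrr a : ominus a a = 0.
Proof. by rewrite /ominus subrr maxxx. Qed.

Lemma ominusr0 a : 0 <= a -> ominus a 0 = a.
Proof. by move=> a0; rewrite /ominus subr0; apply/max_idPr. Qed.

Lemma ler_ominusD a b : a <= ominus a b + b.
Proof. by rewrite -lerBlDr le_max lexx orbT. Qed.

Lemma ominus_le a b p : 0 <= p -> a <= p + b -> ominus a b <= p.
Proof. by move=> ? ?; rewrite /ominus ge_max; apply/andP; split; lra. Qed.

Lemma ominus_lel a a' b : a <= a' -> ominus a b <= ominus a' b.
Proof. by move=> aa'; rewrite /ominus le_max2 // lerD2r. Qed.

Lemma ominus_triangle a b c p q : in01 a -> in01 b -> in01 c ->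
  ominus a b <= p -> ominus b c <= q -> ominus a c <= oplus p q.
Proof.
move=> [? ?] [? ?] [? ?]; rewrite /ominus /oplus !ge_max !le_min.
move=> /andP[? ?] /andP[? ?].
by apply/andP; split; apply/andP; split; lra.
Qed.

Lemma ominus_le_oplus a b p : 0 <= p -> a <= oplus p b -> ominus a b <= p.
Proof. by rewrite /oplus le_min => p0 /andP[? _]; apply: ominus_le. Qed.

Lemma oplus_ge0 p q : 0 <= p -> 0 <= q -> 0 <= oplus p q.
Proof. by move=> ? ?; rewrite /oplus le_min; apply/andP; split; lra. Qed.

End UnitInterval.

Section Lift.
Context {R : realType} {X : Type}.
Implicit Types (f : X -> R) (A : set X).

Lemma lift_in01 f A : (forall x, in01 (f x)) -> in01 (lift f A).
Proof. by move=> f01; apply: join01_in01 => _ [x _ <-]. Qed.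

Lemma le_lift {f A x} : (forall x, in01 (f x)) -> A x -> f x <= lift f A.
Proof. by move=> f01 Ax; apply: join01_ub; [move=> _ [y _ <-] | exists x]. Qed.

Lemma lift_le f A b : 0 <= b -> (forall x, A x -> f x <= b) -> lift f A <= b.
Proof. by move=> b0 fb; apply: join01_le => // _ [x /fb ? <-]. Qed.

End Lift.

Section AlphaT.
Context {R : realType} {X : Type} {F : set (X -> R)}.
Hypothesis F01 : F `<=` [set f | forall x, in01 (f x)].
Implicit Types (A B C : set X) (f : X -> R).

Let lift_in01F f A : F f -> in01 (lift f A).
Proof. by move=> /F01; apply: lift_in01. Qed.

Let alphaT_elt_in01 A B t :
  [set ominus (lift f A) (lift f B) | f in F] t -> in01 t.
Proof. by move=> [f Ff <-]; apply: ominus_in01; apply: lift_in01F. Qed.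

Lemma alphaT_in01 A B : in01 (alphaT F A B).
Proof. exact/join01_in01/alphaT_elt_in01. Qed.

Lemma le_alphaT {f} A B : F f -> ominus (lift f A) (lift f B) <= alphaT F A B.
Proof. by move=> Ff; apply: join01_ub; [apply: alphaT_elt_in01 | exists f]. Qed.

Lemma alphaT_le A B p : 0 <= p ->
  (forall f, F f -> ominus (lift f A) (lift f B) <= p) -> alphaT F A B <= p.
Proof. by move=> p0 Fp; apply: join01_le => // _ [f /Fp ? <-]. Qed.

Lemma alphaT_pseudometric : directed_pseudometric (alphaT F).
Proof.
split; first exact: alphaT_in01.
split.
  move=> A; apply/eqP; rewrite eq_le (proj1 (alphaT_in01 A A)) andbT.
  by apply: alphaT_le => // f _; rewrite ominusrr.
move=> A B C; apply: alphaT_le.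
  by apply: oplus_ge0; [case: (alphaT_in01 A B) | case: (alphaT_in01 B C)].
move=> f Ff; apply: (ominus_triangle _ (lift f B));
  by [apply: lift_in01F | apply: le_alphaT].
Qed.

Lemma alphaT_join_preserving : join_preserving_first (alphaT F).
Proof.
move=> I Xs Y; set U := \bigcup_(i in _) Xs i; set J := join01 _.
have J01 : in01 J by apply: join01_in01 => _ [i _ <-]; apply: alphaT_in01.
have le_J i : alphaT F (Xs i) Y <= J.
  by apply: join01_ub; [move=> _ [j _ <-]; apply: alphaT_in01 | exists i].
apply/eqP; rewrite eq_le; apply/andP; split.
  apply: alphaT_le; first by case: J01.
  move=> f Ff; apply: ominus_le; first by case: J01.
  apply: lift_le => [|x [i _ Xix]].
    by case: J01 (lift_in01F f Y Ff) => ? _ [? _]; lra.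
  apply: le_trans (le_lift (F01 _ Ff) Xix) _.
  apply: le_trans (ler_ominusD _ (lift f Y)) _; rewrite lerD2r.
  exact: le_trans (le_alphaT _ _ Ff) (le_J i).
apply: join01_le => [|_ [i _ <-]]; first by case: (alphaT_in01 U Y).
apply: alphaT_le => [|f Ff]; first by case: (alphaT_in01 U Y).
apply: le_trans (le_alphaT _ _ Ff); apply: ominus_lel.
apply: lift_le => [|x Xix]; first by case: (lift_in01F f U Ff).
by apply: le_lift (F01 _ Ff) _; exists i.
Qed.

End AlphaT.

Lemma alphaT_subset {R : realType} {X : Type} (F G : set (X -> R)) (A B : set X) :
  G `<=` [set g | forall x, in01 (g x)] -> F `<=` G ->
  alphaT F A B <= alphaT G A B.
Proof.
move=> G01 FG; apply: join01_le; first by case: (alphaT_in01 G01 A B).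
by move=> _ [f /FG Gf <-]; apply: le_alphaT.
Qed.

Section GammaT.
Context {R : realType} {X : Type}.
Implicit Types (d : set X -> set X -> R) (A B Y : set X).

Lemma gammaT_in01 d : gammaT d `<=` [set f | forall x, in01 (f x)].
Proof. by move=> f []. Qed.

Lemma gammaT_subset d1 d2 : (forall A B, d1 A B <= d2 A B) ->
  gammaT d1 `<=` gammaT d2.
Proof. by move=> d12 f [f01 fd1]; split=> // A B; apply: le_trans (fd1 A B) _. Qed.

Lemma alphaT_gammaT_le d A B : 0 <= d A B -> alphaT (gammaT d) A B <= d A B.
Proof. by move=> d0; apply: alphaT_le => // f [_]. Qed.

Lemma lift_dist_point d Y A : join_preserving_first d ->
  lift (fun x => d [set x] Y) A = d A Y.
Proof.
move=> jp; have := jp {x | A x} (fun i => [set sval i]) Y.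
have -> : \bigcup_(i in [set: {x | A x}]) [set sval i] = A.
  apply/seteqP; split => [x [[y Ay] _ /= ->] // | x Ax].
  by exists (exist _ x Ax).
move=> ->; congr join01; apply/seteqP; split => r.
  by move=> [x Ax <-]; exists (exist _ x Ax).
by move=> [[x Ax] _ <-]; exists x.
Qed.

Lemma dist_point_gammaT d Y : directed_pseudometric d ->
  join_preserving_first d -> gammaT d (fun x => d [set x] Y).
Proof.
move=> [d01 [_ dtri]] jp; split=> [x | A B]; first exact: d01.
rewrite !lift_dist_point //; apply: ominus_le_oplus; first by case: (d01 A B).
exact: dtri.
Qed.

Lemma le_alphaT_gammaT d A Y : directed_pseudometric d ->
  join_preserving_first d -> d A Y <= alphaT (gammaT d) A Y.
Proof.
move=> dpm jp; have [d01 [ddiag _]] := dpm.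
have := le_alphaT (gammaT_in01 d) A Y (dist_point_gammaT d Y dpm jp).
by rewrite !lift_dist_point // ddiag ominusr0 //; case: (d01 A Y).
Qed.

End GammaT.

Theorem mainTheorem16 (R : realType) (X : Type) (d : set X -> set X -> R) :
  directed_pseudometric d ->
  let d0 := alphaT (gammaT d) in
  [/\ directed_pseudometric d0,
      (forall X1 X2, d0 X1 X2 <= d X1 X2),
      join_preserving_first d0 &
      (forall d' : set X -> set X -> R,
         directed_pseudometric d' ->
         (forall X1 X2, d' X1 X2 <= d X1 X2) ->
         join_preserving_first d' ->
         forall X1 X2, d' X1 X2 <= d0 X1 X2)].
Proof.
move=> [d01 _] d0; split.
- exact: alphaT_pseudometric (gammaT_in01 d).
- by move=> A B; apply: alphaT_gammaT_le; case: (d01 A B).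
- exact: alphaT_join_preserving (gammaT_in01 d).
- move=> d' d'pm d'd jp A B.
  apply: le_trans (le_alphaT_gammaT d' A B d'pm jp) _.
  by apply: alphaT_subset; [exact: gammaT_in01 | exact: gammaT_subset].
Qed.
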